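(* Let $\Theta$ be a basic predicate signature with set of constants $C$, let $\bar C$ be an infinite denumerable set of new constants, and let $\Gamma$ be a Hintikka set for $\mathbf{Tm}^*$ in the universe $C\cup\bar C$. Then there exist a four-valued modal structure $\mathfrak A=\langle U,\cdot^{\mathfrak A}\rangle$ over $\Theta(\bar C)$ with $(C\cup\bar C)^{\mathfrak A}=U$ and a $\mathbf{Tm}^*$-valuation $\bar v$ over $\mathfrak A$ such that $\bar v(\varphi)=\mathsf L$ for every signed formula $\mathsf L{:}\varphi\in\Gamma$.
   Context: Syntax: $\Theta$ has predicate symbols of arity $\ge1$ and constants $C$, no function symbols, no equality; $\Theta(\bar C)$ adds the constants $\bar C$. Formulas: atomic $P\tau_1\ldots\tau_n$ ($\tau_i$ variables or constants), $\neg\varphi$, $\Box\varphi$, $\forall x\varphi$, $\varphi\to\psi$; $\exists x\varphi$ abbreviates $\neg\forall x\neg\varphi$. For a formula $\varphi$ with at most $x$ free, $\varphi(c)$ denotes $\varphi[x/c]$. Variants $\varphi\sim\psi$: obtained from one another by adding/deleting void quantifiers or renaming bound variables (keeping free variables in place). A signed formula is $\mathsf L{:}\varphi$ with $\mathsf L\in\{\mathsf T,\mathsf t,\mathsf f,\mathsf F\}$ and $\varphi$ a closed formula over $\Theta(\bar C)$. Semantics: $\tilde\neg$: $\mathsf T\mapsto\{\mathsf F\},\mathsf t\mapsto\{\mathsf f\},\mathsf f\mapsto\{\mathsf t\},\mathsf F\mapsto\{\mathsf T\}$; write $\neg\mathsf L$ for the unique element of $\tilde\neg\mathsf L$. $a\tilde\to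 b$ (rows $a$, columns $b$ in order $\mathsf T,\mathsf t,\mathsf f,\mathsf F$): row $\mathsf T$: $\{\mathsf T\},\{\mathsf t\},\{\mathsf f\},\{\mathsf F\}$; row $\mathsf t$: $\{\mathsf T\},\{\mathsf T,\mathsf t\},\{\mathsf f\},\{\mathsf f\}$; row $\mathsf f$: $\{\mathsf T\},\{\mathsf T,\mathsf t\},\{\mathsf T,\mathsf t\},\{\mathsf t\}$; row $\mathsf F$: all $\{\mathsf T\}$. $\tilde\Box_1\mathsf T=\{\mathsf T,\mathsf t\}$, $\tilde\Box_1a=\{\mathsf f,\mathsf F\}$ for $a\neq\mathsf T$. $\tilde\forall^d_4(X)=\{\min X\}$, order $\mathsf F<\mathsf f<\mathsf t<\mathsf T$. A four-valued modal structure over $\Theta(\bar C)$: $\mathfrak A=\langle U,\cdot^{\mathfrak A}\rangle$, $U\ne\emptyset$, $P^{\mathfrak A}:U^n\to\{\mathsf T,\mathsf t,\mathsf f,\mathsf F\}$ for $n$-ary $P$, $c^{\mathfrak A}\in U$ for constants. When every element of $U$ is denoted by a constant, a $\mathbf{Tm}^*$-valuation over $\mathfrak A$ is a map $v$ from closed formulas over $\Theta(\bar C)$ to $\{\mathsf T,\mathsf t,\mathsf f,\mathsf F\}$ with: $v(Pc_1\ldots c_n)=P^{\mathfrak A}(c_1^{\mathfrak A},\ldots,c_n^{\mathfrak A})$; $v(\neg\varphi)\in\tilde\neg v(\varphi)$; $v(\Box\varphi)\in\tilde\Box_1 v(\varphi)$; $v(\varphi\to\psi)\in v(\varphi)\tilde\to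 v(\psi)$; $v(\forall x\varphi)\in\tilde\forall^d_4(\{v(\varphi[x/c]):c\in C\cup\bar C\})$; $v(\varphi)=v(\varphi')$ if $\varphi\sim\varphi'$. Hintikka set: a set $\Gamma$ of signed formulas over $\Theta(\bar C)$ such that: (1) if $\mathsf L{:}\varphi,\mathsf L'{:}\varphi'\in\Gamma$ and $\varphi\sim\varphi'$ then $\mathsf L=\mathsf L'$; (2) if $\mathsf L{:}\neg\varphi\in\Gamma$ then $\neg\mathsf L{:}\varphi\in\Gamma$; (3) if $\mathsf T{:}\Box\varphi$ or $\mathsf t{:}\Box\varphi$ is in $\Gamma$ then $\mathsf T{:}\varphi\in\Gamma$; (4) if $\mathsf F{:}\Box\varphi$ or $\mathsf f{:}\Box\varphi$ is in $\Gamma$ then $\mathsf L{:}\varphi\in\Gamma$ for a unique $\mathsf L\in\{\mathsf t,\mathsf f,\mathsf F\}$; (5) if $\mathsf T{:}(\varphi\to\psi)\in\Gamma$ then either $\mathsf F{:}\varphi\in\Gamma$, or $\mathsf T{:}\psi\in\Gamma$, or $\mathsf t{:}\varphi,\mathsf t{:}\psi\in\Gamma$, or $\mathsf f{:}\varphi,\mathsf t{:}\psi\in\Gamma$, or $\mathsf f{:}\varphi,\mathsf f{:}\psi\in\Gamma$; (6) if $\mathsf t{:}(\varphi\to\psi)\in\Gamma$ then one of the pairs $\{\mathsf T{:}\varphi,\mathsf t{:}\psi\}$, $\{\mathsf t{:}\varphi,\mathsf t{:}\psi\}$, $\{\mathsf f{:}\varphi,\mathsf t{:}\psi\}$, $\{\mathsf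 f{:}\varphi,\mathsf f{:}\psi\}$ is included in $\Gamma$; (7) if $\mathsf f{:}(\varphi\to\psi)\in\Gamma$ then one of $\{\mathsf T{:}\varphi,\mathsf f{:}\psi\}$, $\{\mathsf t{:}\varphi,\mathsf f{:}\psi\}$, $\{\mathsf t{:}\varphi,\mathsf F{:}\psi\}$ is included in $\Gamma$; (8) if $\mathsf F{:}(\varphi\to\psi)\in\Gamma$ then $\mathsf T{:}\varphi,\mathsf F{:}\psi\in\Gamma$; (9) if $\mathsf T{:}\forall x\varphi\in\Gamma$ then $\mathsf T{:}\varphi(c)\in\Gamma$ for every $c\in C\cup\bar C$; (10) if $\mathsf t{:}\forall x\varphi\in\Gamma$ then $\mathsf t{:}\varphi(c)\in\Gamma$ for some $c\in C\cup\bar C$ and for every $c'\in(C\cup\bar C)\setminus\{c\}$ either $\mathsf T{:}\varphi(c')\in\Gamma$ or $\mathsf t{:}\varphi(c')\in\Gamma$; (11) if $\mathsf f{:}\forall x\varphi\in\Gamma$ then $\mathsf f{:}\varphi(c)\in\Gamma$ for some $c\in C\cup\bar C$ and for every $c'\in(C\cup\bar C)\setminus\{c\}$, one of $\mathsf T{:}\varphi(c')$, $\mathsf t{:}\varphi(c')$, $\mathsf f{:}\varphi(c')$ belongs to $\Gamma$ and $\mathsf F{:}\varphi(c')\notin\Gamma$; (12) if $\mathsf F{:}\forall x\varphi\in\Gamma$ then $\mathsf F{:}\varphi(c)\in\Gamma$ for some $c\in C\cup\bar C$. *)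

From Stdlib Require Import List Arith.
Import ListNotations.

Section Syntax.
Variables (Pred : Type) (ar : Pred -> nat) (K : Type).

Inductive term : Type :=
| Var : nat -> term
| Cst : K -> term.

Inductive form : Type :=
| Atom : Pred -> list term -> form
| Neg : form -> form
| Box : form -> form
| Forall : nat -> form -> form
| Imp : form -> form -> form.

Fixpoint wf (phi : form) : Prop :=
  match phi with
  | Atom p ts => length ts = ar p
  | Neg a => wf a
  | Box a => wf a
  | Forall _ a => wf a
  | Imp a b => wf a /\ wf b
  end.

Definition term_has_var (x : nat) (t : term) : Prop :=
  match t with Var y => y = x | Cst _ => False end.

Fixpoint free (x : nat) (phi : form) : Prop :=
  match phi with
  | Atom _ ts => exists t, In t ts /\ term_has_var x t
  | Neg a => free x a
  | Box a => free x a
  | Forall y a => y <> x /\ free x a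
  | Imp a b => free x a \/ free x b
  end.

Definition closed (phi : form) : Prop := forall x, ~ free x phi.

Definition subst_term (x : nat) (s : term) (t : term) : term :=
  match t with
  | Var y => if Nat.eqb y x then s else t
  | Cst _ => t
  end.

Fixpoint subst (x : nat) (s : term) (phi : form) : form :=
  match phi with
  | Atom p ts => Atom p (map (subst_term x s) ts)
  | Neg a => Neg (subst x s a)
  | Box a => Box (subst x s a)
  | Forall y a => if Nat.eqb y x then Forall y a else Forall y (subst x s a)
  | Imp a b => Imp (subst x s a) (subst x s b)
  end.

Definition inst (x : nat) (c : K) (phi : form) : form := subst x (Cst c) phi.

Fixpoint substitutable (y x : nat) (phi : form) : Prop :=
  match phi with
  | Atom _ _ => True
  | Neg a => substitutable y x a
  | Box a => substitutable y x a
  | Forall z a => z = x \/ ((free x a -> z <> y) /\ substitutable y x a)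
  | Imp a b => substitutable y x a /\ substitutable y x b
  end.

Inductive variant : form -> form -> Prop :=
| var_refl : forall a, variant a a
| var_sym : forall a b, variant a b -> variant b a
| var_trans : forall a b c, variant a b -> variant b c -> variant a c
| var_void : forall x a, ~ free x a -> variant (Forall x a) a
| var_rename : forall x y a, ~ free y a -> substitutable y x a ->
    variant (Forall x a) (Forall y (subst x (Var y) a))
| var_neg : forall a b, variant a b -> variant (Neg a) (Neg b)
| var_box : forall a b, variant a b -> variant (Box a) (Box b)
| var_forall : forall x a b, variant a b -> variant (Forall x a) (Forall x b)
| var_imp : forall a b a' b', variant a a' -> variant b b' ->
    variant (Imp a b) (Imp a' b').

End Syntax.

Arguments Var {K}.
Arguments Cst {K}.
Arguments Atom {Pred K}.
Arguments Neg {Pred K}.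
Arguments Box {Pred K}.
Arguments Forall {Pred K}.
Arguments Imp {Pred K}.

Inductive label : Type := LT | Lt | Lf | LF.

Definition rank (l : label) : nat :=
  match l with LF => 0 | Lf => 1 | Lt => 2 | LT => 3 end.

Definition negL (l : label) : label :=
  match l with LT => LF | Lt => Lf | Lf => Lt | LF => LT end.

Definition box_set (a r : label) : Prop :=
  match a with
  | LT => r = LT \/ r = Lt
  | _ => r = Lf \/ r = LF
  end.

Definition imp_set (a b r : label) : Prop :=
  match a, b with
  | LT, LT => r = LT
  | LT, Lt => r = Lt
  | LT, Lf => r = Lf
  | LT, LF => r = LF
  | Lt, LT => r = LT
  | Lt, Lt => r = LT \/ r = Lt
  | Lt, Lf => r = Lf
  | Lt, LF => r = Lf
  | Lf, LT => r = LT
  | Lf, Lt => r = LT \/ r = Lt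
  | Lf, Lf => r = LT \/ r = Lt
  | Lf, LF => r = Lt
  | LF, _ => r = LT
  end.

Section Semantics.
Variables (Pred : Type) (ar : Pred -> nat) (K : Type).
Notation form := (form Pred K).

Definition hintikka (G : label -> form -> Prop) : Prop :=
  (forall L phi, G L phi -> wf Pred ar K phi /\ closed Pred K phi) /\
  (forall L L' phi phi', G L phi -> G L' phi' -> variant Pred K phi phi' -> L = L') /\
  (forall L phi, G L (Neg phi) -> G (negL L) phi) /\
  (forall phi, (G LT (Box phi) \/ G Lt (Box phi)) -> G LT phi) /\
  (forall phi, (G LF (Box phi) \/ G Lf (Box phi)) ->
     exists L, (L = Lt \/ L = Lf \/ L = LF) /\ G L phi /\
       forall L', (L' = Lt \/ L' = Lf \/ L' = LF) -> G L' phi -> L' = L) /\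
  (forall phi psi, G LT (Imp phi psi) ->
     G LF phi \/ G LT psi \/ (G Lt phi /\ G Lt psi) \/
     (G Lf phi /\ G Lt psi) \/ (G Lf phi /\ G Lf psi)) /\
  (forall phi psi, G Lt (Imp phi psi) ->
     (G LT phi /\ G Lt psi) \/ (G Lt phi /\ G Lt psi) \/
     (G Lf phi /\ G Lt psi) \/ (G Lf phi /\ G Lf psi)) /\
  (forall phi psi, G Lf (Imp phi psi) ->
     (G LT phi /\ G Lf psi) \/ (G Lt phi /\ G Lf psi) \/ (G Lt phi /\ G LF psi)) /\
  (forall phi psi, G LF (Imp phi psi) -> G LT phi /\ G LF psi) /\
  (forall x phi, G LT (Forall x phi) -> forall c, G LT (inst Pred K x c phi)) /\
  (forall x phi, G Lt (Forall x phi) ->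
     exists c, G Lt (inst Pred K x c phi) /\
       forall c', c' <> c -> G LT (inst Pred K x c' phi) \/ G Lt (inst Pred K x c' phi)) /\
  (forall x phi, G Lf (Forall x phi) ->
     exists c, G Lf (inst Pred K x c phi) /\
       forall c', c' <> c ->
         (G LT (inst Pred K x c' phi) \/ G Lt (inst Pred K x c' phi) \/
          G Lf (inst Pred K x c' phi)) /\ ~ G LF (inst Pred K x c' phi)) /\
  (forall x phi, G LF (Forall x phi) -> exists c, G LF (inst Pred K x c phi)).

(* A Tm^*-valuation over the four-valued modal structure <U, I, cI>
   (I interprets predicates on argument lists of length ar p, cI interprets
   constants), in which every element of U is denoted by a constant. *)
Definition cf (phi : form) : Prop := wf Pred ar K phi /\ closed Pred K phi.

Definition valuation (U : Type) (I : Pred -> list U -> label) (cI : K -> U)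
  (v : form -> label) : Prop :=
  (forall p (cs : list K), cf (Atom p (map Cst cs)) ->
     v (Atom p (map Cst cs)) = I p (map cI cs)) /\
  (forall phi, cf (Neg phi) -> v (Neg phi) = negL (v phi)) /\
  (forall phi, cf (Box phi) -> box_set (v phi) (v (Box phi))) /\
  (forall phi psi, cf (Imp phi psi) -> imp_set (v phi) (v psi) (v (Imp phi psi))) /\
  (forall x phi, cf (Forall x phi) ->
     (exists c, v (Forall x phi) = v (inst Pred K x c phi)) /\
     (forall c, rank (v (Forall x phi)) <= rank (v (inst Pred K x c phi)))) /\
  (forall phi phi', cf phi -> cf phi' -> variant Pred K phi phi' -> v phi = v phi').

End Semantics.

(* The constants themselves serve as the universe, and the valuation is defined by recursion
   on the size of formulas: an atom gets the label Γ gives it (T if none), ¬ and ∀ are computed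
   by their tables (an instance φ(c) has the size of φ, so ∀ is a legitimate recursive case),
   and the choices the tables leave open for □ and → are resolved by looking the formula up in
   Γ. Induction on size then shows that the Hintikka clauses force this valuation to agree with
   Γ. Invariance under variants goes by induction on the variant derivation; because the
   quantifier case instantiates bound variables, the induction has to be carried out for all
   simultaneous substitutions of constants for free variables at once. *)
From Stdlib Require Import List Arith Lia Classical ClassicalEpsilon FunctionalExtensionality.

Definition holds (Q : Prop) : bool := if excluded_middle_informative Q then true else false.

Lemma holds_true (Q : Prop) : Q -> holds Q = true.
Proof. unfold holds; destruct excluded_middle_informative; tauto. Qed.

Lemma holds_false (Q : Prop) : ~ Q -> holds Q = false.
Proof. unfold holds; destruct excluded_middle_informative; tauto. Qed.

Lemma holds_iff (Q R : Prop) : (Q <-> R) -> holds Q = holds R.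
Proof.
  intros QR. destruct (classic Q).
  - rewrite !holds_true; tauto.
  - rewrite !holds_false; tauto.
Qed.

Definition box_label (a : label) (choose_t choose_f : bool) : label :=
  match a with
  | LT => if choose_t then Lt else LT
  | _ => if choose_f then Lf else LF
  end.

Definition imp_label (a b : label) (choose_t : bool) : label :=
  let T_or_t := if choose_t then Lt else LT in
  match a, b with
  | LT, l => l
  | Lt, LT => LT | Lt, Lt => T_or_t | Lt, Lf => Lf | Lt, LF => Lf
  | Lf, LT => LT | Lf, Lt => T_or_t | Lf, Lf => T_or_t | Lf, LF => Lt
  | LF, _ => LT
  end.

Lemma box_set_box_label a choose_t choose_f : box_set a (box_label a choose_t choose_f).
Proof. destruct a, choose_t, choose_f; simpl; auto. Qed.

Lemma imp_set_imp_label a b choose_t : imp_set a b (imp_label a b choose_t).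
Proof. destruct a, b, choose_t; simpl; auto. Qed.

Definition min_label {K : Type} (f : K -> label) : label :=
  if holds (exists c, f c = LF) then LF else
  if holds (exists c, f c = Lf) then Lf else
  if holds (exists c, f c = Lt) then Lt else LT.

Lemma min_label_eq {K : Type} (f : K -> label) l :
  (exists c, f c = l) -> (forall c, rank l <= rank (f c)) -> min_label f = l.
Proof.
  intros attained lower.
  assert (above : forall l', rank l' < rank l -> ~ exists c, f c = l').
  { intros l' lt_l'l [c fc]. specialize (lower c). rewrite fc in lower. lia. }
  unfold min_label.
  destruct l; repeat first [ rewrite holds_true by exact attained
                           | rewrite holds_false by (apply above; simpl; lia) ];
    reflexivity.
Qed.

Lemma exists_min_label {K : Type} (f : K -> label) : inhabited K ->
  exists l, (exists c, f c = l) /\ forall c, rank l <= rank (f c).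
Proof.
  intros [k].
  destruct (classic (exists c, f c = LF)) as [HF | NF].
  { exists LF. split; [exact HF | intro; simpl; lia]. }
  destruct (classic (exists c, f c = Lf)) as [Hf | Nf].
  { exists Lf. split; [exact Hf|].
    intro c. destruct (f c) eqn:E; simpl; try lia. exfalso; eauto. }
  destruct (classic (exists c, f c = Lt)) as [Ht | Nt].
  { exists Lt. split; [exact Ht|].
    intro c. destruct (f c) eqn:E; simpl; try lia; exfalso; eauto. }
  exists LT. split.
  - exists k. destruct (f k) eqn:E; auto; exfalso; eauto.
  - intro c. destruct (f c) eqn:E; simpl; try lia; exfalso; eauto.
Qed.

Lemma min_label_spec {K : Type} (f : K -> label) : inhabited K ->
  (exists c, min_label f = f c) /\ forall c, rank (min_label f) <= rank (f c).
Proof.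
  intros HK. destruct (exists_min_label f HK) as [l [[c fc] lower]].
  rewrite (min_label_eq f l) by eauto. split; eauto.
Qed.

Lemma min_label_const {K : Type} (f : K -> label) l : inhabited K ->
  (forall c, f c = l) -> min_label f = l.
Proof.
  intros [k] const. apply min_label_eq.
  - exists k; auto.
  - intro c. rewrite const. auto.
Qed.

Section Formulas.
Variables P K : Type.

Definition unset_var (r : nat -> option K) (y : nat) : nat -> option K :=
  fun z => if Nat.eqb z y then None else r z.

Definition set_var (r : nat -> option K) (x : nat) (c : K) : nat -> option K :=
  fun z => if Nat.eqb z x then Some c else r z.

Definition csubst_term (r : nat -> option K) (t : term K) : term K :=
  match t with
  | Var z => match r z with Some c => Cst c | None => Var z end
  | Cst c => Cst c
  end.

Fixpoint csubst (r : nat -> option K) (a : form P K) : form P K :=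
  match a with
  | Atom p ts => Atom p (map (csubst_term r) ts)
  | Neg b => Neg (csubst r b)
  | Box b => Box (csubst r b)
  | Forall y b => Forall y (csubst (unset_var r y) b)
  | Imp b d => Imp (csubst r b) (csubst r d)
  end.

Lemma unset_var_eq r y : unset_var r y y = None.
Proof. unfold unset_var. rewrite Nat.eqb_refl. reflexivity. Qed.

Lemma unset_var_neq r y z : z <> y -> unset_var r y z = r z.
Proof. intro zy. unfold unset_var. apply Nat.eqb_neq in zy. rewrite zy. reflexivity. Qed.

Lemma set_var_eq r x c : set_var r x c x = Some c.
Proof. unfold set_var. rewrite Nat.eqb_refl. reflexivity. Qed.

Lemma csubst_ext (a : form P K) : forall r r',
  (forall z, free P K z a -> r z = r' z) -> csubst r a = csubst r' a.
Proof.
  induction a as [p ts | b IH | b IH | y b IH | b IHb d IHd]; intros r r' agree; simpl in *.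
  - f_equal. apply map_ext_in. intros [w|c] Hin; simpl; auto.
    rewrite (agree w); auto. exists (Var w); simpl; auto.
  - f_equal; auto.
  - f_equal; auto.
  - f_equal. apply IH. intros z Hz. unfold unset_var.
    destruct (Nat.eqb_spec z y); auto.
  - f_equal; auto.
Qed.

Lemma free_csubst (a : form P K) : forall r z,
  free P K z (csubst r a) -> free P K z a /\ r z = None.
Proof.
  induction a as [p ts | b IH | b IH | y b IH | b IHb d IHd]; intros r z Hz; simpl in *.
  - destruct Hz as [t [Ht Hv]]. apply in_map_iff in Ht as [[w|c] [<- Hin]]; simpl in Hv.
    + destruct (r w) eqn:E; simpl in Hv; [contradiction|]. subst w.
      split; auto. exists (Var z); simpl; auto.
    + contradiction.
  - auto.
  - auto.
  - destruct Hz as [zy Hz]. apply IH in Hz as [Hz Hr].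
    rewrite unset_var_neq in Hr by congruence. auto.
  - destruct Hz as [Hz|Hz]; [apply IHb in Hz | apply IHd in Hz]; tauto.
Qed.

Lemma csubst_empty (a : form P K) : forall r,
  (forall z, r z = None) -> csubst r a = a.
Proof.
  induction a as [p ts | b IH | b IH | y b IH | b IHb d IHd]; intros r empty; simpl.
  - f_equal. rewrite <- (map_id ts) at 2. apply map_ext_in.
    intros [w|c] _; simpl; auto. rewrite empty. auto.
  - f_equal; auto.
  - f_equal; auto.
  - f_equal. apply IH. intro z. unfold unset_var. destruct (Nat.eqb z y); auto.
  - f_equal; auto.
Qed.

Lemma subst_not_free (a : form P K) : forall x s,
  ~ free P K x a -> subst P K x s a = a.
Proof.
  induction a as [p ts | b IH | b IH | y b IH | b IHb d IHd]; intros x s notfree; simpl in *.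
  - f_equal. rewrite <- (map_id ts) at 2. apply map_ext_in.
    intros [w|c] Hin; simpl; auto. destruct (Nat.eqb_spec w x); auto.
    subst. exfalso. apply notfree. exists (Var x); simpl; auto.
  - f_equal; auto.
  - f_equal; auto.
  - destruct (Nat.eqb_spec y x); auto. f_equal. apply IH. auto.
  - f_equal; auto.
Qed.

Lemma inst_csubst (a : form P K) : forall r x c,
  r x = None -> inst P K x c (csubst r a) = csubst (set_var r x c) a.
Proof.
  unfold inst.
  induction a as [p ts | b IH | b IH | y b IH | b IHb d IHd]; intros r x c rx; simpl.
  - f_equal. rewrite map_map. apply map_ext_in. intros [w|e] _; simpl; auto.
    unfold set_var. destruct (Nat.eqb_spec w x) as [-> | wx].
    + rewrite rx. simpl. rewrite Nat.eqb_refl. auto.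
    + destruct (r w); simpl; auto. apply Nat.eqb_neq in wx. rewrite wx. auto.
  - f_equal; auto.
  - f_equal; auto.
  - destruct (Nat.eqb_spec y x) as [-> | yx].
    + f_equal. apply csubst_ext. intros z _. unfold unset_var, set_var.
      destruct (Nat.eqb_spec z x); auto.
    + f_equal. rewrite IH by (rewrite unset_var_neq; auto).
      apply csubst_ext. intros z _. unfold unset_var, set_var.
      destruct (Nat.eqb_spec z x), (Nat.eqb_spec z y); subst; congruence.
  - f_equal; auto.
Qed.

Lemma csubst_subst_var (a : form P K) : forall r x y c,
  r y = Some c -> substitutable P K y x a ->
  csubst r (subst P K x (Var y) a) = csubst (set_var r x c) a.
Proof.
  induction a as [p ts | b IH | b IH | z b IH | b IHb d IHd];
    intros r x y c ry subst_ok; simpl in *.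
  - f_equal. rewrite map_map. apply map_ext_in. intros [w|e] _; simpl; auto.
    unfold set_var. destruct (Nat.eqb_spec w x); simpl; auto. rewrite ry. auto.
  - f_equal; auto.
  - f_equal; auto.
  - destruct (Nat.eqb_spec z x) as [-> | zx]; simpl.
    + f_equal. apply csubst_ext. intros w _. unfold unset_var, set_var.
      destruct (Nat.eqb_spec w x); auto.
    + destruct subst_ok as [-> | [no_capture subst_ok]]; [congruence|].
      destruct (Nat.eqb_spec z y) as [-> | zy].
      * assert (notfree : ~ free P K x b) by (intro F; exact (no_capture F eq_refl)).
        rewrite subst_not_free by exact notfree. f_equal. apply csubst_ext.
        intros w Hw. unfold unset_var, set_var.
        destruct (Nat.eqb_spec w y); auto. destruct (Nat.eqb_spec w x); subst; tauto.
      * f_equal. rewrite (IH _ x y c) by (rewrite ?unset_var_neq; auto).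
        apply csubst_ext. intros w _. unfold unset_var, set_var.
        destruct (Nat.eqb_spec w x), (Nat.eqb_spec w z); subst; congruence.
  - destruct subst_ok. f_equal; auto.
Qed.

Lemma subst_var_csubst (a : form P K) : forall (r r' : nat -> option K) x y,
  r x = None -> r' y = None ->
  (forall z, free P K z a -> z <> x -> r z = r' z) -> substitutable P K y x a ->
  subst P K x (Var y) (csubst r a) = csubst r' (subst P K x (Var y) a).
Proof.
  induction a as [p ts | b IH | b IH | z b IH | b IHb d IHd];
    intros r r' x y rx r'y agree subst_ok; simpl in *.
  - f_equal. rewrite !map_map. apply map_ext_in. intros [w|e] Hin; simpl; auto.
    destruct (Nat.eqb_spec w x) as [-> | wx].
    + rewrite rx. simpl. rewrite Nat.eqb_refl. simpl. rewrite r'y. auto.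
    + simpl. rewrite <- (agree w) by (auto; exists (Var w); simpl; auto).
      destruct (r w); simpl; auto. apply Nat.eqb_neq in wx. rewrite wx. auto.
  - f_equal; eauto.
  - f_equal; eauto.
  - destruct (Nat.eqb_spec z x) as [-> | zx]; simpl.
    + f_equal. apply csubst_ext. intros w Hw. unfold unset_var.
      destruct (Nat.eqb_spec w x); auto.
    + destruct subst_ok as [-> | [no_capture subst_ok]]; [congruence|].
      destruct (Nat.eqb_spec z y) as [-> | zy].
      * assert (notfree : ~ free P K x b) by (intro F; exact (no_capture F eq_refl)).
        rewrite !subst_not_free; auto.
        2: { intro F. apply free_csubst in F. tauto. }
        f_equal. apply csubst_ext. intros w Hw. unfold unset_var.
        destruct (Nat.eqb_spec w y); auto. apply agree; auto. congruence.
      * f_equal. apply IH; rewrite ?unset_var_neq; auto.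
        intros w Hw wx. unfold unset_var. destruct (Nat.eqb_spec w z); auto.
  - destruct subst_ok. f_equal; [apply IHb | apply IHd]; auto.
Qed.

Lemma substitutable_csubst (a : form P K) : forall r x y,
  substitutable P K y x a -> substitutable P K y x (csubst r a).
Proof.
  induction a as [p ts | b IH | b IH | z b IH | b IHb d IHd];
    intros r x y subst_ok; simpl in *; auto.
  - destruct subst_ok as [zx | [no_capture subst_ok]]; auto. right. split; auto.
    intro F. apply free_csubst in F. tauto.
  - destruct subst_ok; split; auto.
Qed.

Lemma variant_csubst (a b : form P K) :
  variant P K a b -> forall r, variant P K (csubst r a) (csubst r b).
Proof.
  induction 1 as [a | a b _ IH | a b c _ IHab _ IHbc | x a notfree | x y a notfree subst_ok
                 | a b _ IH | a b ab IH | x a b _ IH | a b a' b' aa' IHa bb' IHb];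
    intro r; simpl.
  - apply var_refl.
  - apply var_sym; auto.
  - eapply var_trans; eauto.
  - replace (csubst r a) with (csubst (unset_var r x) a).
    + apply var_void. intro F. apply free_csubst in F. tauto.
    + apply csubst_ext. intros z Hz. apply unset_var_neq. congruence.
  - rewrite <- (subst_var_csubst a (unset_var r x) (unset_var r y) x y);
      rewrite ?unset_var_eq; auto.
    + apply var_rename.
      * intro F. apply free_csubst in F. tauto.
      * apply substitutable_csubst; auto.
    + intros z Hz zx. rewrite !unset_var_neq by congruence. reflexivity.
  - apply var_neg; auto.
  - apply var_box; auto.
  - apply var_forall; auto.
  - apply var_imp; auto.
Qed.

Fixpoint form_size (a : form P K) : nat :=
  match a with
  | Atom _ _ => 1
  | Neg b => S (form_size b)
  | Box b => S (form_size b)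
  | Forall _ b => S (form_size b)
  | Imp b d => S (form_size b + form_size d)
  end.

Lemma form_size_inst (a : form P K) x c : form_size (inst P K x c a) = form_size a.
Proof.
  unfold inst. revert x. induction a; intro x; simpl; auto.
  destruct (Nat.eqb n x); simpl; auto.
Qed.

Section CanonicalValuation.
Variable G : label -> form P K -> Prop.

(* Γ is consulted up to variants, so that the choices made for □ and → respect the variant
   clause of a valuation. *)
Definition variant_in (L : label) (a : form P K) : Prop :=
  exists b, variant P K a b /\ G L b.

Lemma variant_in_variant L a b : variant P K a b -> variant_in L a <-> variant_in L b.
Proof.
  intro ab. split; intros [e [Hv Ge]]; exists e; split; auto.
  - eapply var_trans; [apply var_sym|]; eauto.
  - eapply var_trans; eauto.
Qed.

Definition atom_label (p : P) (ts : list (term K)) : label :=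
  if holds (G Lt (Atom p ts)) then Lt else
  if holds (G Lf (Atom p ts)) then Lf else
  if holds (G LF (Atom p ts)) then LF else LT.

Fixpoint eval_fuel (n : nat) (a : form P K) : label :=
  match n with
  | 0 => LT
  | S n =>
    match a with
    | Atom p ts => atom_label p ts
    | Neg b => negL (eval_fuel n b)
    | Box b => box_label (eval_fuel n b) (holds (variant_in Lt (Box b)))
                 (holds (variant_in Lf (Box b)))
    | Forall x b => min_label (fun c => eval_fuel n (inst P K x c b))
    | Imp b d => imp_label (eval_fuel n b) (eval_fuel n d) (holds (variant_in Lt (Imp b d)))
    end
  end.

Lemma eval_fuel_enough : forall n m a,
  form_size a <= n -> form_size a <= m -> eval_fuel n a = eval_fuel m a.
Proof.
  induction n as [|n IH]; intros [|m] a Hn Hm;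
    try solve [destruct a; simpl in *; lia].
  destruct a; simpl in *; f_equal; try (apply IH; lia).
  apply functional_extensionality. intro c. apply IH; rewrite form_size_inst; lia.
Qed.

Definition canonical_val (a : form P K) : label := eval_fuel (form_size a) a.

Lemma canonical_val_atom p ts : canonical_val (Atom p ts) = atom_label p ts.
Proof. reflexivity. Qed.

Lemma canonical_val_neg b : canonical_val (Neg b) = negL (canonical_val b).
Proof. reflexivity. Qed.

Lemma canonical_val_box b : canonical_val (Box b) =
  box_label (canonical_val b) (holds (variant_in Lt (Box b))) (holds (variant_in Lf (Box b))).
Proof. reflexivity. Qed.

Lemma canonical_val_imp b d : canonical_val (Imp b d) =
  imp_label (canonical_val b) (canonical_val d) (holds (variant_in Lt (Imp b d))).
Proof.
  unfold canonical_val; simpl.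
  rewrite (eval_fuel_enough _ (form_size b) b), (eval_fuel_enough _ (form_size d) d); auto; lia.
Qed.

Lemma canonical_val_forall x b :
  canonical_val (Forall x b) = min_label (fun c => canonical_val (inst P K x c b)).
Proof.
  unfold canonical_val; simpl. f_equal. apply functional_extensionality. intro c.
  apply eval_fuel_enough; rewrite form_size_inst; lia.
Qed.

Hypothesis HK : inhabited K.

Lemma canonical_val_variant_csubst (a b : form P K) :
  variant P K a b -> forall r, canonical_val (csubst r a) = canonical_val (csubst r b).
Proof.
  induction 1 as [a | a b _ IH | a b c _ IHab _ IHbc | x a notfree | x y a notfree subst_ok
                 | a b _ IH | a b ab IH | x a b _ IH | a b a' b' aa' IHa bb' IHb];
    intro r; simpl.
  - reflexivity.
  - auto.
  - congruence.
  - rewrite canonical_val_forall. apply min_label_const; auto. intro c.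
    rewrite inst_csubst by apply unset_var_eq. f_equal.
    apply csubst_ext. intros z Hz. unfold set_var, unset_var.
    destruct (Nat.eqb_spec z x); subst; tauto.
  - rewrite !canonical_val_forall. f_equal. apply functional_extensionality. intro c.
    rewrite !inst_csubst by apply unset_var_eq.
    rewrite (csubst_subst_var a _ x y c) by (auto; apply set_var_eq).
    f_equal. apply csubst_ext. intros z Hz. unfold set_var, unset_var.
    destruct (Nat.eqb_spec z x); auto.
    destruct (Nat.eqb_spec z y); subst; tauto.
  - rewrite !canonical_val_neg, IH. reflexivity.
  - rewrite !canonical_val_box, IH.
    assert (Hv : variant P K (Box (csubst r a)) (Box (csubst r b)))
      by (apply var_box, variant_csubst; auto).
    f_equal; apply holds_iff, variant_in_variant, Hv.
  - rewrite !canonical_val_forall. f_equal. apply functional_extensionality. intro c.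
    rewrite !inst_csubst by apply unset_var_eq. apply IH.
  - rewrite !canonical_val_imp, IHa, IHb.
    assert (Hv : variant P K (Imp (csubst r a) (csubst r b)) (Imp (csubst r a') (csubst r b')))
      by (apply var_imp; apply variant_csubst; auto).
    f_equal; apply holds_iff, variant_in_variant, Hv.
Qed.

Lemma canonical_val_variant (a b : form P K) :
  variant P K a b -> canonical_val a = canonical_val b.
Proof.
  intro ab. pose proof (canonical_val_variant_csubst a b ab (fun _ => None)) as E.
  rewrite !csubst_empty in E; auto.
Qed.

Lemma canonical_val_valuation (ar : P -> nat) :
  valuation P ar K K (fun p cs => atom_label p (map Cst cs)) (fun c => c) canonical_val.
Proof.
  split; [|split; [|split; [|split; [|split]]]].
  - intros p cs _. rewrite map_id. reflexivity.
  - reflexivity.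
  - intros b _. rewrite canonical_val_box. apply box_set_box_label.
  - intros b d _. rewrite canonical_val_imp. apply imp_set_imp_label.
  - intros x a _. rewrite canonical_val_forall. apply min_label_spec; auto.
  - intros a b _ _ ab. apply canonical_val_variant; auto.
Qed.

Section Agreement.
Variable ar : P -> nat.
Hypothesis HG : hintikka P ar K G.

Lemma hintikka_label_unique L L' a : G L a -> G L' a -> L = L'.
Proof.
  destruct HG as (_ & Huniq & _). intros GL GL'. eapply Huniq; eauto. apply var_refl.
Qed.

Lemma hintikka_not_variant_in L L' a : G L a -> L' <> L -> ~ variant_in L' a.
Proof.
  destruct HG as (_ & Huniq & _). intros GL L'L [b [ab Gb]]. apply L'L.
  symmetry. eapply Huniq; eauto.
Qed.

Lemma variant_in_self L a : G L a -> variant_in L a.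
Proof. intro GL. exists a. split; auto. apply var_refl. Qed.

Lemma canonical_val_atom_agree p ts L : G L (Atom p ts) -> canonical_val (Atom p ts) = L.
Proof.
  intro GL. rewrite canonical_val_atom. unfold atom_label.
  assert (other : forall L', L' <> L -> holds (G L' (Atom p ts)) = false).
  { intros L' L'L. apply holds_false. intro GL'. apply L'L.
    eapply hintikka_label_unique; eauto. }
  destruct L; repeat first [ rewrite holds_true by exact GL
                           | rewrite other by discriminate ];
    reflexivity.
Qed.

Lemma canonical_val_box_agree b L :
  (forall L', G L' b -> canonical_val b = L') -> G L (Box b) -> canonical_val (Box b) = L.
Proof.
  destruct HG as (_ & _ & _ & HboxT & HboxF & _). intros IH GL.
  rewrite canonical_val_box.
  destruct L.
  - rewrite (IH LT) by exact (HboxT b (or_introl GL)).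
    rewrite holds_false by (apply (hintikka_not_variant_in LT); auto; discriminate).
    reflexivity.
  - rewrite (IH LT) by exact (HboxT b (or_intror GL)).
    rewrite holds_true by (apply variant_in_self; auto).
    reflexivity.
  - destruct (HboxF b (or_intror GL)) as [L' [HL' [GL' _]]]. rewrite (IH L') by auto.
    rewrite (holds_true (variant_in Lf _)) by (apply variant_in_self; auto).
    destruct HL' as [-> | [-> | ->]]; reflexivity.
  - destruct (HboxF b (or_introl GL)) as [L' [HL' [GL' _]]]. rewrite (IH L') by auto.
    rewrite (holds_false (variant_in Lf _))
      by (apply (hintikka_not_variant_in LF); auto; discriminate).
    destruct HL' as [-> | [-> | ->]]; reflexivity.
Qed.

Lemma canonical_val_imp_agree b d L :
  (forall L', G L' b -> canonical_val b = L') -> (forall L', G L' d -> canonical_val d = L') ->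
  G L (Imp b d) -> canonical_val (Imp b d) = L.
Proof.
  destruct HG as (_ & _ & _ & _ & _ & HimpT & Himpt & Himpf & HimpF & _).
  intros IHb IHd GL. rewrite canonical_val_imp.
  destruct L.
  - rewrite holds_false by (apply (hintikka_not_variant_in LT); auto; discriminate).
    destruct (HimpT b d GL) as [Gb | [Gd | [[Gb Gd] | [[Gb Gd] | [Gb Gd]]]]];
      rewrite ?(IHb _ Gb), ?(IHd _ Gd);
      destruct (canonical_val b), (canonical_val d); reflexivity.
  - rewrite holds_true by (apply variant_in_self; auto).
    destruct (Himpt b d GL) as [[Gb Gd] | [[Gb Gd] | [[Gb Gd] | [Gb Gd]]]];
      rewrite (IHb _ Gb), (IHd _ Gd); reflexivity.
  - destruct (Himpf b d GL) as [[Gb Gd] | [[Gb Gd] | [Gb Gd]]];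
      rewrite (IHb _ Gb), (IHd _ Gd); reflexivity.
  - destruct (HimpF b d GL) as [Gb Gd]. rewrite (IHb _ Gb), (IHd _ Gd). reflexivity.
Qed.

Lemma canonical_val_forall_agree x b L :
  (forall c L', G L' (inst P K x c b) -> canonical_val (inst P K x c b) = L') ->
  G L (Forall x b) -> canonical_val (Forall x b) = L.
Proof.
  destruct HG as (_ & _ & _ & _ & _ & _ & _ & _ & _ & HallT & Hallt & Hallf & HallF).
  intros IH GL. rewrite canonical_val_forall.
  destruct L.
  - destruct HK as [k]. apply min_label_eq.
    + exists k. apply IH, HallT; auto.
    + intro c. rewrite (IH c LT) by (apply HallT; auto). auto.
  - destruct (Hallt x b GL) as [c [Gc others]]. apply min_label_eq.
    + exists c. auto.
    + intro c'. destruct (classic (c' = c)) as [-> | c'c].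
      * rewrite (IH c Lt Gc). auto.
      * destruct (others c' c'c) as [G' | G']; rewrite (IH _ _ G'); simpl; lia.
  - destruct (Hallf x b GL) as [c [Gc others]]. apply min_label_eq.
    + exists c. auto.
    + intro c'. destruct (classic (c' = c)) as [-> | c'c].
      * rewrite (IH c Lf Gc). auto.
      * destruct (others c' c'c) as [[G' | [G' | G']] _]; rewrite (IH _ _ G'); simpl; lia.
  - destruct (HallF x b GL) as [c Gc]. apply min_label_eq.
    + exists c. auto.
    + intro. simpl. lia.
Qed.

Lemma hintikka_canonical_val (a : form P K) : forall L, G L a -> canonical_val a = L.
Proof.
  destruct HG as (_ & _ & Hneg & _).
  induction a as [a IH] using (Wf_nat.induction_ltof1 _ form_size).
  unfold Wf_nat.ltof in IH.
  destruct a as [p ts | b | b | x b | b d]; intros L GL.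
  - apply canonical_val_atom_agree; auto.
  - rewrite canonical_val_neg, (IH b) with (L := negL L) by (simpl; auto).
    destruct L; reflexivity.
  - apply canonical_val_box_agree; auto.
  - apply canonical_val_forall_agree; auto.
    intros c L' GL'. apply IH; auto. rewrite form_size_inst. simpl. lia.
  - apply canonical_val_imp_agree; auto; intros L' GL'; apply IH; auto; simpl; lia.
Qed.

End Agreement.
End CanonicalValuation.
End Formulas.

Theorem mainTheorem3
  (Pred : Type) (ar : Pred -> nat) (ar_pos : forall p, 1 <= ar p)
  (C : Type) (Cbar : Type)
  (Cbar_denum : exists e : nat -> Cbar, (forall m n, e m = e n -> m = n) /\
                                        (forall c, exists n, e n = c))
  (G : label -> form Pred (C + Cbar) -> Prop)
  (HG : hintikka Pred ar (C + Cbar) G) :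
  exists (U : Type) (I : Pred -> list U -> label) (cI : C + Cbar -> U),
    inhabited U /\
    (forall u : U, exists c, cI c = u) /\
    exists v : form Pred (C + Cbar) -> label,
      valuation Pred ar (C + Cbar) U I cI v /\
      (forall L phi, G L phi -> v phi = L).
Proof.
  assert (HK : inhabited (C + Cbar)).
  { destruct Cbar_denum as [e _]. exact (inhabits (inr (e 0))). }
  exists (C + Cbar)%type, (fun p cs => atom_label _ _ G p (map Cst cs)), (fun c => c).
  split; [exact HK|].
  split; [intro u; exists u; reflexivity|].
  exists (canonical_val _ _ G). split.
  - apply canonical_val_valuation. exact HK.
  - intros L phi GL. eapply hintikka_canonical_val; eauto.
Qed.
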